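(* Let $B=(V,E)$ be an unordered strongly $k$-simple Bratteli diagram such that for every $n\ge1$ each vertex of $V^{n+1}_o$ is joined by an edge to every vertex of $V^n$. Suppose there are elements $d_1,\dots,d_k\in\mathrm{K}_{I_B}$, each given at every level $n\ge1$ by a vector $d_i^{(n)}=(d_i(v))_{v\in V^n_o}\in\mathbb Z^{V^n_o}$ compatible with the connecting maps, such that: (a) for integers $c_1,\dots,c_k$, $c_1d_1+\dots+c_kd_k=0$ if and only if $c_1=c_2=\dots=c_k$; (b) for every level $n$ and every $v\in V^n_o$, $d_i(v)\in\{0,1,-1\}$ for $1\le i\le k$; (c) for every $v\in V^n_o$, the set $\{i: d_i(v)\ne0\}$ has either $0$ or $2$ elements, and if it equals $\{i_1,i_2\}$ then $(d_{i_1}(v),d_{i_2}(v))$ is $(+1,-1)$ or $(-1,+1)$. Then there is an order $>$ on $B$ such that $(V,E,>)$ is a (strongly) $k$-simple ordered Bratteli diagram.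
   Context: Bratteli diagram: vertex sets $V^0=\{v_0\},V^1,\dots$, edge sets $E^n$ with $s(E^n)=V^n$, $r(E^n)=V^{n+1}$; $w$ at level $m$ is connected to $v$ at level $n<m$ if a finite path goes from $v$ to $w$. $k$-simple: for each $n\ge1$ pairwise disjoint $V^n_1,\dots,V^n_k\subseteq V^n$ with (i) $s(r^{-1}(v))\subseteq V^n_i$ for $v\in V^{n+1}_i$; (ii) for all $i,n$ some $m>n$ with every vertex of $V^m_i$ connected to every vertex of $V^n_i$. $V^n_o:=V^n\setminus\bigcup_iV^n_i$. Strongly $k$-simple: additionally, for every $n$ there is $m>n$ such that each vertex of $V^m_o$ connected to some vertex of $V^n_o$ is connected to all of them. $\mathrm{K}_{I_B}=\varinjlim(\mathbb Z^{V^n_o},\phi_n)$ where $\phi_n$ has $(w,v)$-entry equal to the number of edges from $v\in V^n_o$ to $w\in V^{n+1}_o$; compatibility means $\phi_n(d_i^{(n)})=d_i^{(n+1)}$. An order is a linear order on each $r^{-1}(v)$, extended lexicographically to finite paths with common range; $e+1$ is the successor; $E_{\max}$ the maximal edges; $X_{\max},X_{\min}$ the infinite paths of maximal/minimal edges. $(V,E,>)$ is $k$-simple ordered if: (1) $(V,E)$ is $k$-simple; (2) there are infinite paths $z_{i,\max},z_{i,\min}$ with level-$n$ vertices in $V^n_i$, $X_{\max}=\{z_{1,\max},\dots,z_{k,\max}\}$, $X_{\min}=\{z_{1,\min},\dots,z_{k,\min}\}$; there is $L$ such that for $n\ge L$, $v\in V^n_o$, the maximal (resp. minimal) finite path from $v_0$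 to $v$ passes at level 1 through $V^1_i$, written $m_+(v)=i$ (resp. $m_-(v)=i$); (3) for $v\in V^n_o$: (a) each edge $e$ with $s(e)=v$ satisfies $m_-(s(e+1))=m_+(v)$ (for maximal $e$, $s(e+1)$ means the level-$n$ source of the successor of a non-maximal finite path starting with $e$); (b) if $e\notin E_{\max}$, $r(e)=v$, $s(e)\in V^{n-1}_i$, $n\ge3$, then $m_-(s(e+1))=i$. *)

From HB Require Import structures.
From mathcomp Require Import all_boot all_order all_algebra.
Import GRing.Theory Num.Theory.

Set Implicit Arguments.
Unset Strict Implicit.
Unset Printing Implicit Defensive.

Record bratteli := Bratteli {
  V : nat -> finType;
  E : nat -> finType;
  src : forall n, E n -> V n;
  rng : forall n, E n -> V n.+1;
  V0_single : #|V 0| = 1;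
  rng_surj : forall n (w : V n.+1), exists e : E n, rng e = w;
  src_surj : forall n (v : V n), exists e : E n, src e = v }.

Arguments src {b n}.
Arguments rng {b n}.

Section Defs.
Variable B : bratteli.

Inductive reach : forall n, V B n -> forall m, V B m -> Prop :=
| reach_refl n (v : V B n) : reach v v
| reach_step n (v : V B n) m (e : E B m) : reach v (src e) -> reach v (rng e).

Variable k : nat.
Variable P : forall n, 'I_k -> {set V B n}.   (* the sets V^n_i, used for n >= 1 *)

Definition Vo n : {set V B n} := ~: \bigcup_(i < k) P n i.

Definition ksimple : Prop :=
  [/\ (forall n (i j : 'I_k), 0 < n -> i != j -> [disjoint P n i & P n j]),
      (forall n i, 0 < n -> P n i != set0),
      (forall n i (e : E B n), 0 < n -> rng e \in P n.+1 i -> src e \in P n i)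
    & (forall n i, 0 < n -> exists m, n < m /\
          forall (w : V B m) (v : V B n), w \in P m i -> v \in P n i -> reach v w)].

Definition strongly_ksimple : Prop :=
  ksimple /\
  forall n, 0 < n -> exists m, n < m /\
    forall w : V B m, w \in Vo m ->
      (exists v : V B n, v \in Vo n /\ reach v w) ->
      forall v : V B n, v \in Vo n -> reach v w.

(* The group K_{I_B} = lim (Z^{V^n_o}, phi_n).  A family d n : V n -> int
   (only values on V^n_o matter) is a thread if phi_n (d n) = d (n+1). *)
Definition phi_thread (d : forall n, V B n -> int) : Prop :=
  forall n (w : V B n.+1), 0 < n -> w \in Vo n.+1 ->
    d n.+1 w = (\sum_(v in Vo n)
                 (#|[set e : E B n | (src e == v) && (rng e == w)]|%:Z * d n v))%R.

(* A thread represents 0 in the direct limit iff some representative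
   vanishes (its images at all higher levels being the later entries). *)
Definition lim_zero (x : forall n, V B n -> int) : Prop :=
  exists n, 0 < n /\ forall v : V B n, v \in Vo n -> x n v = 0%R.

Definition is_order (lt : forall n, rel (E B n)) : Prop :=
  forall n (e f g : E B n),
    [/\ lt n e f -> rng e = rng f,
        ~~ lt n e e,
        (lt n e f -> lt n f g -> lt n e g)
      & (rng e = rng f -> [|| e == f, lt n e f | lt n f e])].

Variable lt : forall n, rel (E B n).

Definition is_max n (e : E B n) : Prop := forall f : E B n, rng f = rng e -> f = e \/ lt f e.
Definition is_min n (e : E B n) : Prop := forall f : E B n, rng f = rng e -> f = e \/ lt e f.
Arguments is_max [n].
Arguments is_min [n].

Definition is_succ n (e f : E B n) : Prop :=
  [/\ rng f = rng e, lt e f &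
      forall g : E B n, rng g = rng e -> lt e g -> g = f \/ lt f g].
Arguments is_succ [n].

Inductive down (ext : forall n, E B n -> Prop) : forall n, V B n -> forall m, V B m -> Prop :=
| down_refl n (v : V B n) : down ext v v
| down_step n (e : E B n) m (u : V B m) : ext n e -> down ext (src e) u -> down ext (rng e) u.

(* m_+(v) = i : the maximal path from v0 to v passes at level 1 through V^1_i *)
Definition mplus n (v : V B n) (i : 'I_k) : Prop :=
  exists a : V B 1, down (@is_max) v a /\ a \in P 1 i.
Definition mminus n (v : V B n) (i : 'I_k) : Prop :=
  exists a : V B 1, down (@is_min) v a /\ a \in P 1 i.

Definition ipath (x : forall n, E B n) : Prop := forall n, rng (x n) = src (x n.+1).

Definition ksimple_ordered : Prop :=
  [/\ ksimple,
      (exists zmax zmin : 'I_k -> forall n, E B n,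
        [/\ (forall i, ipath (zmax i) /\ ipath (zmin i)),
            (forall i n, 0 < n -> src (zmax i n) \in P n i /\ src (zmin i n) \in P n i),
            (forall x, ipath x -> ((forall n, is_max (x n)) <-> exists i, forall n, x n = zmax i n))
          & (forall x, ipath x -> ((forall n, is_min (x n)) <-> exists i, forall n, x n = zmin i n))])
    & (exists L,
        [/\ (forall n (v : V B n), L <= n -> 0 < n -> v \in Vo n ->
                (exists i, mplus v i) /\ (exists i, mminus v i)),
            (* (3a): e with s(e) = v; e_n..e_{j-1} maximal (from v up to u),
               f = e_j non-maximal with s f = u, f' = f + 1, and w the level-n
               vertex of the successor path (min path down from s f'). *)
            (forall n (v : V B n), L <= n -> 0 < n -> v \in Vo n ->
              forall j (u : V B j) (f f' : E B j) (w : V B n),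
                down (@is_max) u v -> src f = u -> ~ is_max f -> is_succ f f' ->
                down (@is_min) (src f') w ->
                forall i, mplus v i -> mminus w i)
          &
            (forall n (v : V B n.+1) (e f : E B n) (i : 'I_k),
                L <= n.+1 -> 2 <= n -> v \in Vo n.+1 -> rng e = v -> ~ is_max e ->
                src e \in P n i -> is_succ e f -> mminus (src f) i)])].

End Defs.

(* Order the edges into each vertex [w] by a list.  If [w] lies in a cell [V_i], the
   funnel levels given by k-simplicity let the maximal (resp. minimal) edges lead, at
   alternate funnel levels, back to fixed vertices of [V_i]; so each cell carries exactly
   one maximal and one minimal infinite path.  If [w] lies in [V_o], label an edge [e]
   from [m_-(s e)] to [m_+(s e)], i.e. from the index where [d(s e)] is [-1] to the one
   where it is [+1] (from the cell index when [s e] lies in a cell).  Compatibility of the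
   [d_i] says that these labelled edges have net flow [d(w)], and (a) says that every
   proper cut of the label set is crossed; by Euler's theorem the edges into [w] form a
   trail from [m_-(w)] to [m_+(w)], and "consecutive edges have matching labels" is
   exactly condition (3).  Placing an edge from a cell first or last according to the
   parity of the level forces every infinite extremal path into a cell. *)

From HB Require Import structures.
From mathcomp Require Import all_boot all_order all_algebra.
From mathcomp Require Import zify ring.
From Stdlib Require Import IndefiniteDescription Eqdep_dec PeanoNat Classical.
Import GRing.Theory Num.Theory.

Set Implicit Arguments.
Unset Strict Implicit.
Unset Printing Implicit Defensive.

Definition b2z (b : bool) : int := (b : nat)%:Z.

Section Trails.
Variables (T : eqType) (k : nat) (etail ehead : T -> 'I_k) (i0 : 'I_k).

Definition chained : rel T := fun x y => ehead x == etail y.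
Definition trail (s : seq T) := (s != [::]) && sorted chained s.
Definition tstart (s : seq T) := if s is x :: _ then etail x else i0.
Definition tend (s : seq T) := if s is x :: s' then ehead (last x s') else i0.
Definition visits (s : seq T) (l : 'I_k) := (l \in map etail s) || (l == tend s).

Definition net_flow (s : seq T) (i : 'I_k) : int :=
  ((count (fun t => ehead t == i) s)%:Z - (count (fun t => etail t == i) s)%:Z)%R.

Lemma net_flow_cons x s i :
  net_flow (x :: s) i = (b2z (ehead x == i) - b2z (etail x == i) + net_flow s i)%R.
Proof. rewrite /net_flow /b2z /= !PoszD; ring. Qed.

Lemma net_flow_sum s i :
  net_flow s i = (\sum_(t <- s) (b2z (ehead t == i) - b2z (etail t == i)))%R.
Proof.
elim: s => [|x s IH]; first by rewrite big_nil /net_flow /= subrr.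
by rewrite net_flow_cons IH big_cons.
Qed.

Lemma net_flow_cat s1 s2 i : net_flow (s1 ++ s2) i = (net_flow s1 i + net_flow s2 i)%R.
Proof. rewrite /net_flow !count_cat !PoszD; ring. Qed.

Lemma net_flow_flatten F i : net_flow (flatten F) i = (\sum_(s <- F) net_flow s i)%R.
Proof.
elim: F => [|s F IH]; first by rewrite big_nil /net_flow /= subrr.
by rewrite /= net_flow_cat IH big_cons.
Qed.

Lemma perm_net_flow s1 s2 i : perm_eq s1 s2 -> net_flow s1 i = net_flow s2 i.
Proof. by move=> /permP H; rewrite /net_flow !H. Qed.

Lemma net_flow_trail s i :
  trail s -> net_flow s i = (b2z (i == tend s) - b2z (i == tstart s))%R.
Proof.
case: s => [|x s] //= /andP[_]; elim: s x => [|y s IH] x /=.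
  by move=> _; rewrite net_flow_cons /net_flow /= subrr addr0 ![i == _]eq_sym.
case/andP=> /eqP Hxy Hp; rewrite net_flow_cons (IH y Hp) /= Hxy.
rewrite (eq_sym (etail y)) (eq_sym (etail x)); ring.
Qed.

Lemma tstart_visits s : trail s -> tstart s \in map etail s.
Proof. by case: s => [|x s] // _; rewrite /= inE eqxx. Qed.

Lemma visits_ehead s t : sorted chained s -> t \in s -> visits s (ehead t).
Proof.
rewrite /visits; elim: s => [|x s IH] //= Hs; rewrite inE => /orP[/eqP ->|ts].
  case: s Hs {IH} => [|y s] /=; first by move=> _; rewrite eqxx orbT.
  by case/andP=> /eqP -> _; rewrite !inE eqxx !orbT.
have Hs' : sorted chained s by case: s Hs {IH ts} => //= y s /andP[].
case/orP: (IH Hs' ts) => [H|/eqP ->]; first by rewrite inE H orbT.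
by case: s ts {IH Hs Hs'} => //= y s _; rewrite eqxx !orbT.
Qed.

Lemma trail_cat s1 s2 : trail s1 -> trail s2 -> tend s1 = tstart s2 ->
  [/\ trail (s1 ++ s2), tstart (s1 ++ s2) = tstart s1 & tend (s1 ++ s2) = tend s2].
Proof.
case: s1 => [|x s1] //; case: s2 => [|y s2] // /andP[_ /= H1] /andP[_ /= H2] /= E.
split => //; last by rewrite last_cat.
by rewrite /trail /= cat_path H1 /= /chained E eqxx.
Qed.

Lemma trail_catP s1 s2 : s1 != [::] -> s2 != [::] -> trail (s1 ++ s2) ->
  [/\ trail s1, trail s2 & tend s1 = tstart s2].
Proof.
case: s1 => [|x s1] //; case: s2 => [|y s2] // _ _ /andP[_] /=.
rewrite cat_path => /andP[P1 /= /andP[/eqP E P2]].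
by split; rewrite /trail /= ?P1 ?P2.
Qed.

Lemma closed_trail_rot s l : trail s -> tend s = tstart s -> l \in map etail s ->
  exists r, [/\ trail r, perm_eq r s, tstart r = l & tend r = l].
Proof.
move=> Hs Hc /mapP[t ts El]; case/splitPr: ts Hs Hc => X Y.
case: X => [|x X] Hs Hc; first by exists (t :: Y); split => //; rewrite ?Hc /= El.
have [H1 H2 E] := trail_catP (isT : x :: X != [::]) (isT : t :: Y != [::]) Hs.
have E2 : tend (t :: Y) = tstart (x :: X) by move: Hc; rewrite /tend /= last_cat.
have [H3 H4 H5] := trail_cat H2 H1 E2.
exists ((t :: Y) ++ x :: X); split.
- by [].
- by rewrite perm_catC.
- by rewrite /= El.
- by rewrite H5 E /= El.
Qed.

Lemma closed_trail_splice s1 s2 l : trail s1 -> tend s1 = tstart s1 -> l \in map etail s1 ->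
  trail s2 -> visits s2 l -> exists s3, trail s3 /\ perm_eq s3 (s1 ++ s2).
Proof.
move=> H1 Hc Hl H2; have [r [Hr Pr Hhr Her]] := closed_trail_rot H1 Hc Hl.
case/orP => [/mapP[t ts El]|/eqP El].
  move: H2; case/splitPr: ts => X Y; case: X => [|x X] H2.
    have [H3 _ _] := trail_cat Hr H2 (etrans Her El).
    by exists (r ++ t :: Y); split => //; rewrite perm_cat2r.
  have [H4 H5 E] := trail_catP (isT : x :: X != [::]) (isT : t :: Y != [::]) H2.
  have [H3 H3h _] := trail_cat Hr H5 (etrans Her El).
  have [H6 _ _] := trail_cat H4 H3 (etrans E (etrans (esym El) (esym (etrans H3h Hhr)))).
  exists ((x :: X) ++ r ++ t :: Y); split => //.
  by rewrite perm_catCA perm_cat2r.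
have [H3 _ _] := trail_cat H2 Hr (etrans (esym El) (esym Hhr)).
by exists (s2 ++ r); split => //; rewrite perm_catC perm_cat2r.
Qed.

Definition joinable (s1 s2 : seq T) :=
  tend s1 = tstart s2 \/
  tend s1 = tstart s1 /\ exists2 l, l \in map etail s1 & visits s2 l.

Lemma join_trails s1 s2 : trail s1 -> trail s2 -> joinable s1 s2 ->
  exists2 s, trail s & perm_eq s (s1 ++ s2).
Proof.
move=> H1 H2 [E|[Ec [l Hl Hl2]]].
  by exists (s1 ++ s2); have [] := trail_cat H1 H2 E.
by have [s []] := closed_trail_splice H1 Ec Hl H2 Hl2; exists s.
Qed.

Definition two_of (F : seq (seq T)) s1 s2 := exists R, perm_eq F [:: s1, s2 & R].

Lemma two_of_rem F s1 s2 : s1 \in F -> s2 \in rem s1 F -> two_of F s1 s2.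
Proof.
move=> H1 H2; exists (rem s2 (rem s1 F)).
by apply: (perm_trans (perm_to_rem H1)); rewrite perm_cons perm_to_rem.
Qed.

Lemma two_ofC F s1 s2 : two_of F s1 s2 -> two_of F s2 s1.
Proof.
case=> R H; exists R; apply: (perm_trans H).
by rewrite -[[:: s1, s2 & R]]/([:: s1] ++ [:: s2] ++ R) perm_catCA.
Qed.

Lemma two_of_mem F s1 s2 : two_of F s1 s2 -> s1 \in F /\ s2 \in F.
Proof. by case=> R HR; rewrite !(perm_mem HR) !inE !eqxx orbT. Qed.

Lemma join_family F s1 s2 : all trail F -> two_of F s1 s2 -> joinable s1 s2 ->
  exists F', [/\ size F' < size F, all trail F' & perm_eq (flatten F') (flatten F)].
Proof.
move=> /allP trF [R HR] J.
have [/trF H1 /trF H2] := two_of_mem (ex_intro _ R HR).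
have [s Hs Ps] := join_trails H1 H2 J.
exists (s :: R); split.
- by rewrite (perm_size HR).
- by rewrite /= Hs; apply/allP => U UR; apply: trF; rewrite (perm_mem HR) !inE UR !orbT.
- have /perm_flatten HR' : perm_eq [:: s1, s2 & R] F by rewrite perm_sym.
  by apply: perm_trans HR'; rewrite /= catA perm_cat2r.
Qed.

Section EulerTrail.
Variables (S : seq T) (a b : 'I_k).
Hypothesis flowS : forall i, net_flow S i = (b2z (i == a) - b2z (i == b))%R.
Hypothesis cutS : forall A : {set 'I_k}, A != set0 -> A != setT ->
  has (fun t => (etail t \in A) != (ehead t \in A)) S.

Definition euler_trail s :=
  [/\ perm_eq s S, sorted chained s &
      if s is t :: s' then etail t = b /\ ehead (last t s') = a else a = b].

Lemma family_flow F : all trail F -> perm_eq (flatten F) S -> forall i,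
  (\sum_(s <- F) (b2z (i == tend s) - b2z (i == tstart s)) = b2z (i == a) - b2z (i == b))%R.
Proof.
move=> /allP trF HS i; rewrite -flowS -(perm_net_flow _ HS) net_flow_flatten.
by rewrite big_seq [RHS]big_seq; apply: eq_bigr => s /trF /net_flow_trail ->.
Qed.

Lemma euler_trail_single s : trail s -> perm_eq s S -> exists s', euler_trail s'.
Proof.
move=> Hs HS.
have Hn i : (b2z (i == tend s) - b2z (i == tstart s) = b2z (i == a) - b2z (i == b))%R.
  by rewrite -flowS -(perm_net_flow _ HS) net_flow_trail.
have [sne ss] := andP Hs.
case: (eqVneq a b) => [Eab|Nab]; last first.
  exists s; split => //; case: s Hs sne ss Hn {HS} => //= x s _ _ _ Hn; split.
    have := Hn b; rewrite eqxx (eq_sym b a) (negbTE Nab) /b2z /= sub0r.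
    by case: eqP => //; case: eqP => // _ _ /eqP; rewrite -addr_eq0.
  have := Hn a; rewrite eqxx (negbTE Nab) /b2z /= subr0.
  by case: eqP => // _; case: eqP.
have Ec : tend s = tstart s.
  by have := Hn (tend s); rewrite -Eab eqxx subrr; case: eqP => // _ /eqP.
have Ha : a \in map etail s.
  case: (eqVneq (tstart s) a) => [<-|Nh]; first exact: tstart_visits.
  have A1 : [set a] != set0 by apply/set0Pn; exists a; rewrite inE.
  have A2 : [set a] != setT.
    by apply: contra_neq Nh => EA; apply/set1P; rewrite EA inE.
  case/hasP: (cutS A1 A2) => t; rewrite -(perm_mem HS) => ts; rewrite !inE.
  case: (eqVneq (etail t) a) => [<- _|_]; first exact: map_f.
  case: (eqVneq (ehead t) a) => // Et _.
  have := visits_ehead ss ts; rewrite Et /visits => /orP[//|/eqP ->].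
  by rewrite Ec tstart_visits.
have [r [Hr Pr Hhr Her]] := closed_trail_rot Hs Ec Ha.
exists r; split; first exact: perm_trans HS.
  by case/andP: Hr.
by move: Hr Hhr Her; case: (r) => //= x r' _ -> ->; split.
Qed.

Section Unjoinable.
Variable F : seq (seq T).
Hypotheses (trF : all trail F) (FS : perm_eq (flatten F) S).
Hypothesis unjoinable : forall s1 s2, two_of F s1 s2 -> ~ joinable s1 s2.

Lemma unjoinable_open s : s \in F -> tend s != tstart s ->
  [/\ tend s = a, tstart s = b & a != b].
Proof.
move=> sF No; have Pm := perm_to_rem sF.
have sep s' : s' \in rem s F -> tend s != tstart s' /\ tend s' != tstart s.
  move=> s'F; split; apply/eqP => E; apply: (unjoinable _ (or_introl E)).
    exact: two_of_rem.
  exact/two_ofC/two_of_rem.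
have Hend : (1 <= b2z (tend s == a) - b2z (tend s == b))%R.
  rewrite -(family_flow trF FS) (perm_big _ Pm) big_cons eqxx (negbTE No) /b2z /= subr0.
  rewrite -[X in (X <= _)%R]addr0 lerD2l big_seq sumr_ge0 // => s' /sep[/negbTE].
  by rewrite eq_sym => -> _; rewrite subr0.
have Hstart : (b2z (tstart s == a) - b2z (tstart s == b) <= -1)%R.
  rewrite -(family_flow trF FS) (perm_big _ Pm) big_cons eqxx eq_sym (negbTE No).
  rewrite /b2z /= sub0r -[X in (_ <= X)%R]addr0 lerD2l big_seq sumr_le0 // => s' /sep[_].
  by move/negbTE; rewrite eq_sym => ->; rewrite sub0r oppr_le0.
move: Hend Hstart; rewrite /b2z.
case: (eqVneq (tend s) a) => [Ea|]; case: (eqVneq (tend s) b) => //= Eb;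
case: (eqVneq (tstart s) a) => //= Ha; case: (eqVneq (tstart s) b) => //= Hb _ _.
by split => //; rewrite -Ea.
Qed.

Lemma unjoinable_one_open s1 s2 : two_of F s1 s2 ->
  tend s1 != tstart s1 -> tend s2 != tstart s2 -> False.
Proof.
move=> [R HR] N1 N2; have [s1F s2F] := two_of_mem (ex_intro _ R HR).
have [E1 F1 Nab] := unjoinable_open s1F N1; have [E2 F2 _] := unjoinable_open s2F N2.
have := family_flow trF FS a; rewrite (perm_big _ HR) !big_cons E1 E2 F1 F2.
rewrite eqxx (negbTE Nab) /b2z /= => Eq; suff : (2 <= 1 :> int)%R by [].
rewrite -[X in (_ <= X)%R]Eq subr0 -[X in (X <= _)%R]addr0 addrA lerD2l.
rewrite big_seq sumr_ge0 // => s sR.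
have sF : s \in F by rewrite (perm_mem HR) !inE sR !orbT.
case: (eqVneq (tend s) (tstart s)) => [->|Ns]; first by rewrite subrr.
by have [-> -> _] := unjoinable_open sF Ns; rewrite eqxx (negbTE Nab).
Qed.

Lemma unjoinable_disjoint s1 s2 l : two_of F s1 s2 -> visits s1 l -> visits s2 l -> False.
Proof.
move=> P12 L1 L2; have [s1F s2F] := two_of_mem P12.
have trs s : s \in F -> trail s by move/allP: trF; apply.
have closed_visits s : s \in F -> tend s = tstart s -> visits s l -> l \in map etail s.
  by move=> sF Ec /orP[//|/eqP ->]; rewrite Ec tstart_visits ?trs.
case: (eqVneq (tend s1) (tstart s1)) => [Ec|N1].
  apply: (unjoinable P12); right; split => //.
  by exists l => //; apply: closed_visits.
case: (eqVneq (tend s2) (tstart s2)) => [Ec|N2]; last exact: unjoinable_one_open N1 N2.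
apply: (unjoinable (two_ofC P12)); right; split => //.
by exists l => //; apply: closed_visits.
Qed.

(* The vertices visited by the first trail would form a cut crossed by no edge. *)
Lemma unjoinable_size : size F <= 1.
Proof.
rewrite leqNgt; apply/negP; case EF: F => [|s0 [|s1 F1]] // _.
have trs s : s \in F -> trail s by move/allP: trF; apply.
have s0F : s0 \in F by rewrite EF mem_head.
have other s : s \in s1 :: F1 -> two_of F s0 s.
  by move=> sF; apply: two_of_rem; rewrite // EF /= eqxx.
pose A := [set l | visits s0 l].
have A1 : A != set0.
  by apply/set0Pn; exists (tstart s0); rewrite inE /visits tstart_visits ?trs.
have A2 : A != setT.
  apply/negP => /eqP EA; have : tstart s1 \in A by rewrite EA inE.
  rewrite inE => L0; apply: (unjoinable_disjoint (other _ (mem_head _ _)) L0).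
  by rewrite /visits tstart_visits // trs // EF !inE eqxx orbT.
case/hasP: (cutS A1 A2) => t; rewrite -(perm_mem FS) EF => /flattenP[s].
rewrite inE => /orP[/eqP ->|sF] ts.
  have ss0 : sorted chained s0 by case/andP: (trs _ s0F).
  by rewrite !inE (visits_ehead ss0 ts) /visits (map_f etail ts).
have sF' : s \in F by rewrite EF inE sF orbT.
have ss : sorted chained s by case/andP: (trs s sF').
have L1 : visits s (etail t) by rewrite /visits map_f.
have L2 : visits s (ehead t) := visits_ehead ss ts.
rewrite !inE; case: (boolP (visits s0 (etail t))) => [L|_].
  by case: (unjoinable_disjoint (other _ sF) L L1).
by case: (boolP (visits s0 (ehead t))) => [L|//]; case: (unjoinable_disjoint (other _ sF) L L2).
Qed.

End Unjoinable.

Lemma euler_trail_family n F : size F <= n -> all trail F -> perm_eq (flatten F) S ->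
  exists s, euler_trail s.
Proof.
elim: n F => [|n IHn] F szF trF FS.
  move: szF FS; rewrite leqn0 => /nilP -> /= HS; exists [::]; split => //.
  have := flowS a; rewrite -(perm_net_flow _ HS) /net_flow /= eqxx.
  by case: (a == b) / eqP.
case: (classic (exists s1 s2, two_of F s1 s2 /\ joinable s1 s2)) => [[s1 [s2 [P12 J]]]|No].
  have [F' [szF' trF' FS']] := join_family trF P12 J.
  by apply: (IHn F') => //; [rewrite -ltnS (leq_trans szF') | exact: perm_trans FS' FS].
have unj s1 s2 : two_of F s1 s2 -> ~ joinable s1 s2 by move=> P12 J; apply: No; exists s1, s2.
have := unjoinable_size trF FS unj.
case: F szF trF FS {No unj} => [|s [|//]] szF trF FS _; first exact: (IHn [::]).
by apply: (euler_trail_single (s := s)); [case/andP: trF | rewrite /= cats0 in FS].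
Qed.

Lemma euler_trail_exists : exists s, euler_trail s.
Proof.
apply: (euler_trail_family (n := size S) (F := [seq [:: t] | t <- S])).
- by rewrite size_map.
- by apply/allP => s /mapP[t _ ->].
- by rewrite flatten_seq1.
Qed.

End EulerTrail.

End Trails.

Section Paths.
Variable B : bratteli.

Definition vtx n (v : V B n) : {n : nat & V B n} := existT (fun n => V B n) n v.

Lemma vtx_inj n : injective (@vtx n).
Proof. by move=> v w; apply: (inj_pair2_eq_dec _ Nat.eq_dec). Qed.

Lemma reach_leq n (v : V B n) m (w : V B m) : reach v w -> n <= m.
Proof. by elim => // n0 v0 m0 e _ IH; apply: leqW. Qed.

Lemma reach_same_level n (v : V B n) m (w : V B m) : reach v w -> n = m -> vtx v = vtx w.
Proof.
by case => [//|n0 v0 m0 e H E]; exfalso; move: (reach_leq H); rewrite E ltnn.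
Qed.

Lemma reach_last_edge n (v : V B n) m (w : V B m.+1) : reach v w -> n <= m ->
  exists2 e : E B m, rng e = w & reach v (src e).
Proof.
(* Inverting [reach] needs the target level generalized. *)
have H n0 (v0 : V B n0) M (w0 : V B M) : reach v0 w0 ->
  match M as M0 return V B M0 -> Prop with
  | 0 => fun _ => True
  | S m' => fun w => n0 <= m' -> exists2 e : E B m', rng e = w & reach v0 (src e) end w0.
  case => [n1 v1|n1 v1 m1 e H1 _]; last by exists e.
  by case: n1 v1 => //= m' v1; rewrite ltnn.
exact: (H n v m.+1 w).
Qed.

Lemma down_leq ext n (x : V B n) m (y : V B m) : down ext x y -> m <= n.
Proof. by elim => [//|n0 e m0 y0 _ _ IH]; apply: leqW. Qed.

Definition in_edges n (w : V B n.+1) := [seq e <- enum (E B n) | rng e == w].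

Lemma mem_in_edges n (w : V B n.+1) e : (e \in in_edges w) = (rng e == w).
Proof. by rewrite mem_filter mem_enum andbT. Qed.

Lemma uniq_in_edges n (w : V B n.+1) : uniq (in_edges w).
Proof. by rewrite filter_uniq // enum_uniq. Qed.

End Paths.

Section HeadLast.
Variable T : eqType.

Definition head_sat (p : T -> Prop) (s : seq T) := if s is x :: _ then p x else False.
Definition last_sat (p : T -> Prop) (s : seq T) := if s is x :: s' then p (last x s') else False.

Lemma perm_head_sat (p : T -> Prop) t x : x \in t -> p x ->
  exists2 s, perm_eq s t & head_sat p s.
Proof. by move=> xt px; exists (x :: rem x t); rewrite // perm_sym perm_to_rem. Qed.

Lemma perm_last_sat (p : T -> Prop) t x : x \in t -> p x ->
  exists2 s, perm_eq s t & last_sat p s.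
Proof.
move=> xt px; exists (rcons (rem x t) x); first by rewrite perm_rcons perm_sym perm_to_rem.
by case: (rem x t) => [|y r] //=; rewrite last_rcons.
Qed.

Lemma perm_head_last_sat (p q : T -> Prop) t x y : uniq t -> x != y -> x \in t -> y \in t ->
  p x -> q y -> exists2 s, perm_eq s t & head_sat p s /\ last_sat q s.
Proof.
move=> ut Nxy xt yt px qy; exists (x :: rcons (rem y (rem x t)) y); last first.
  by split => //=; rewrite last_rcons.
rewrite perm_sym; apply: perm_trans (perm_to_rem xt) _; rewrite perm_cons perm_sym perm_rcons.
by rewrite perm_sym perm_to_rem // (mem_rem_uniq x ut) inE eq_sym Nxy yt.
Qed.

End HeadLast.

Section Construction.
Variables (B : bratteli) (k : nat) (P : forall n, 'I_k -> {set V B n}).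
Hypotheses (k_gt0 : 0 < k) (ksP : ksimple P).

Definition i0 : 'I_k := Ordinal k_gt0.

Lemma cell_inj n i j (v : V B n) : 0 < n -> v \in P n i -> v \in P n j -> i = j.
Proof.
case: ksP => disj _ _ _ n_gt0 vi vj; apply/eqP/negP => /negP Nij.
by have := disjointFr (disj n i j n_gt0 Nij) vi; rewrite vj.
Qed.

Lemma cell_nonempty n i : 0 < n -> exists v : V B n, v \in P n i.
Proof. by case: ksP => _ ne _ _ n_gt0; apply/set0Pn; apply: ne. Qed.

Lemma cell_src n i (e : E B n) : 0 < n -> rng e \in P n.+1 i -> src e \in P n i.
Proof. by case: ksP => _ _ down_closed _; apply: down_closed. Qed.

Definition in_cell n (v : V B n) := [exists i, v \in P n i].
Definition cell n (v : V B n) : 'I_k := odflt i0 [pick i | v \in P n i].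

Lemma cellE n (v : V B n) i : 0 < n -> v \in P n i -> cell v = i.
Proof.
move=> n_gt0 vi; rewrite /cell; case: pickP => [j vj /=|H]; first exact: cell_inj vj vi.
by have := H i; rewrite vi.
Qed.

Lemma mem_cell n (v : V B n) : in_cell v -> v \in P n (cell v).
Proof.
by case/existsP => i vi; rewrite /cell; case: pickP => [//|H]; have := H i; rewrite vi.
Qed.

Lemma in_cellI n (v : V B n) i : v \in P n i -> in_cell v.
Proof. by move=> vi; apply/existsP; exists i. Qed.

Lemma in_Vo n (v : V B n) : (v \in Vo P n) = ~~ in_cell v.
Proof.
by rewrite /Vo in_setC; congr negb; apply/bigcupP/existsP => [[i _ H]|[i H]]; exists i.
Qed.

Lemma in_cell_src n (e : E B n) : 0 < n -> in_cell (rng e) -> in_cell (src e).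
Proof. by move=> n_gt0 /existsP[i ei]; apply/existsP; exists i; apply: cell_src. Qed.

Lemma down_cell ext n (x : V B n) m (y : V B m) i :
  down ext x y -> 0 < m -> x \in P n i -> y \in P m i.
Proof.
elim => [//|n0 e m0 y0 _ Hd IH m_gt0 xi]; apply: (IH m_gt0).
by apply: cell_src xi; apply: leq_trans m_gt0 (down_leq Hd).
Qed.

(* Levels 1 = g i 0 < g i 1 < ... such that every vertex of the i-th cell at
   level g i j.+1 is reachable from the fixed vertex u i j of that cell at level g i j. *)
Lemma funnel_next_ex i n : exists m, n < m /\ (0 < n -> forall (w : V B m) (v : V B n),
  w \in P m i -> v \in P n i -> reach v w).
Proof.
case: n => [|n]; first by exists 1.
case: ksP => _ _ _ H4; have [m [Hm H]] := H4 n.+1 i isT.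
by exists m; split => // _ w v Hw Hv; apply: H.
Qed.

Definition funnel_next i n := sval (constructive_indefinite_description _ (funnel_next_ex i n)).

Lemma funnel_nextP i n : n < funnel_next i n /\ (0 < n -> forall w v,
  w \in P (funnel_next i n) i -> v \in P n i -> reach v w).
Proof. exact: (svalP (constructive_indefinite_description _ (funnel_next_ex i n))). Qed.

Definition g i j := iter j (funnel_next i) 1.

Lemma g_lt i j : g i j < g i j.+1.
Proof. exact: (funnel_nextP i (g i j)).1. Qed.

Lemma g_ge i j : j < g i j.
Proof. by elim: j => // j IH; apply: leq_ltn_trans IH (g_lt i j). Qed.

Lemma g_gt0 i j : 0 < g i j.
Proof. exact: leq_ltn_trans (leq0n j) (g_ge i j). Qed.

Lemma g_mono i : {homo g i : j j' / j <= j'}.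
Proof.
move=> j j'; elim: j' => [|j' IH]; first by rewrite leqn0 => /eqP ->.
by rewrite leq_eqVlt => /orP[/eqP ->//|/IH H]; apply: leq_trans H (ltnW (g_lt i j')).
Qed.

Lemma g_segment_uniq i j j' t :
  g i j < t <= g i j.+1 -> g i j' < t <= g i j'.+1 -> j = j'.
Proof.
move=> /andP[A1 A2] /andP[B1 B2]; case: (ltngtP j j') => // H.
  by have := leq_ltn_trans (g_mono i H) B1; rewrite ltnNge A2.
by have := leq_ltn_trans (g_mono i H) A1; rewrite ltnNge B2.
Qed.

Lemma u_ex i j : exists v : V B (g i j), v \in P (g i j) i.
Proof. exact: cell_nonempty (g_gt0 i j). Qed.

Definition u i j := sval (constructive_indefinite_description _ (u_ex i j)).

Lemma u_cell i j : u i j \in P (g i j) i.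
Proof. exact: (svalP (constructive_indefinite_description _ (u_ex i j))). Qed.

Lemma reach_u i j (w : V B (g i j.+1)) : w \in P (g i j.+1) i -> reach (u i j) w.
Proof. by move=> wi; apply: (funnel_nextP i (g i j)).2 (g_gt0 i j) w _ wi (u_cell i j). Qed.

Section Thread.
Unset Implicit Arguments.
Variable d : 'I_k -> forall n, V B n -> int.
Set Implicit Arguments.
Hypothesis Vo_full : forall n (w : V B n.+1) (v : V B n), 0 < n -> w \in Vo P n.+1 ->
  exists e : E B n, src e = v /\ rng e = w.
Hypothesis d_thread : forall i, phi_thread P (d i).
Hypothesis d_indep : forall c : 'I_k -> int,
  lim_zero P (fun n v => \sum_(i < k) c i * d i n v)%R <-> (forall i j, c i = c j).
Hypothesis d_support : forall n (v : V B n), 0 < n -> v \in Vo P n ->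
  #|[set i | d i n v != 0%R]| \in [:: 0; 2] /\
  forall i1 i2, i1 != i2 -> [set i | d i n v != 0%R] = [set i1; i2] ->
    (d i1 n v, d i2 n v) = (1, -1)%R \/ (d i1 n v, d i2 n v) = (-1, 1)%R.

Definition dplus n (v : V B n) : 'I_k := odflt i0 [pick i | d i n v == 1%R].
Definition dminus n (v : V B n) : 'I_k := odflt i0 [pick i | d i n v == (-1)%R].

Lemma pick_uniq (p : pred 'I_k) q : p q -> (forall j, p j -> j = q) -> odflt i0 [pick j | p j] = q.
Proof. by move=> pq H; case: pickP => [j /H //|/(_ q)]; rewrite pq. Qed.

Lemma d_Vo n (v : V B n) : 0 < n -> v \in Vo P n ->
  (forall i, d i n v = b2z (i == dplus v) - b2z (i == dminus v))%R /\
  (dplus v = dminus v -> dplus v = i0).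
Proof.
move=> n_gt0 vVo; have [card_supp supp_pm] := d_support n_gt0 vVo.
set Z := [set i | d i n v != 0%R] in card_supp supp_pm.
have outZ i : i \notin Z -> d i n v = 0%R by rewrite inE negbK => /eqP.
move: card_supp; rewrite !inE => /orP[/eqP/cards0_eq Z0|/cards2P[i1 [i2 [N12 EZ]]]].
  have d0 i : d i n v = 0%R by apply: outZ; rewrite Z0 inE.
  have Ep : dplus v = i0 by rewrite /dplus; case: pickP => [j|//]; rewrite d0.
  have Em : dminus v = i0 by rewrite /dminus; case: pickP => [j|//]; rewrite d0.
  by split => // i; rewrite d0 Ep Em subrr.
have [p [q [Npq dp dq EZ']]] :
    exists p q, [/\ p != q, d p n v = 1%R, d q n v = (-1)%R & Z = [set p; q]].
  case: (supp_pm i1 i2 N12 EZ) => [[E1 E2]|[E1 E2]]; first by exists i1, i2.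
  by exists i2, i1; rewrite eq_sym setUC.
have d0 i : i != p -> i != q -> d i n v = 0%R.
  by move=> N1 N2; apply: outZ; rewrite EZ' !inE negb_or N1 N2.
have Ep : dplus v = p.
  apply: pick_uniq => [|j /eqP dj]; first by rewrite dp.
  case: (eqVneq j p) => // Njp; case: (eqVneq j q) => [Ejq|Njq]; first by move: dj; rewrite Ejq dq.
  by move: dj; rewrite d0.
have Em : dminus v = q.
  apply: pick_uniq => [|j /eqP dj]; first by rewrite dq.
  case: (eqVneq j q) => // Njq; case: (eqVneq j p) => [Ejp|Njp]; first by move: dj; rewrite Ejp dp.
  by move: dj; rewrite d0.
rewrite Ep Em; split; last by move=> E; move: Npq; rewrite E eqxx.
move=> i; case: (eqVneq i p) => [->|Nip]; first by rewrite dp (negbTE Npq) /b2z /= subr0.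
case: (eqVneq i q) => [->|Niq]; first by rewrite dq /b2z /= sub0r.
by rewrite d0 // /b2z /= subrr.
Qed.

(* Were [V_o] empty at level [n], the thread [d_i] would vanish, contradicting (a). *)
Lemma Vo_nonempty n (i j : 'I_k) : 0 < n -> i != j -> exists v : V B n, v \in Vo P n.
Proof.
move=> n_gt0 Nij; apply: NNPP => NoVo.
have Hz : lim_zero P (fun n v => \sum_(l < k) b2z (l == i) * d l n v)%R.
  by exists n; split => // v vVo; exfalso; apply: NoVo; exists v.
by have := (proj1 (d_indep _) Hz) i j; rewrite /= eqxx eq_sym (negbTE Nij).
Qed.

Lemma in_edge_from n (w : V B n.+1) (v : V B n) : 0 < n -> w \in Vo P n.+1 ->
  exists2 e, e \in in_edges w & src e = v.
Proof.
by move=> n_gt0 wVo; have [e [<- Er]] := Vo_full v n_gt0 wVo; exists e; rewrite ?mem_in_edges ?Er.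
Qed.

(* [plus_label v] (resp. [minus_label v]) is the cell through which the maximal
   (resp. minimal) path to [v] leaves level 1, for the order built below; at level 2
   the maximal edges into [V_o] all come from [V^1_i0]. *)
Definition plus_label n (v : V B n) :=
  if in_cell v then cell v else if n == 2 then i0 else dplus v.
Definition minus_label n (v : V B n) := if in_cell v then cell v else dminus v.
Definition tail_label n (e : E B n) := minus_label (src e).
Definition head_label n (e : E B n) := plus_label (src e).

Lemma labels_in_cell n (e : E B n) :
  in_cell (src e) -> tail_label e = cell (src e) /\ head_label e = cell (src e).
Proof. by rewrite /tail_label /head_label /minus_label /plus_label => ->. Qed.

Lemma labels_Vo n (e : E B n) : n != 2 -> ~~ in_cell (src e) ->
  tail_label e = dminus (src e) /\ head_label e = dplus (src e).
Proof.
move=> n_neq2 /negbTE Ie.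
by rewrite /tail_label /head_label /minus_label /plus_label Ie (negbTE n_neq2).
Qed.

Lemma sum_d_Vo n (v : V B n) (c : 'I_k -> int) : 0 < n -> v \in Vo P n ->
  (\sum_(l < k) c l * d l n v = c (dplus v) - c (dminus v))%R.
Proof.
move=> n_gt0 vVo; have [dv _] := d_Vo n_gt0 vVo.
have sum_pt p : (\sum_(l < k) c l * b2z (l == p) = c p)%R.
  rewrite (bigD1 p) //= eqxx /b2z mulr1 big1 ?addr0 // => l Nl.
  by rewrite (negbTE Nl) mulr0.
rewrite (eq_bigr (fun l => c l * b2z (l == dplus v) - c l * b2z (l == dminus v)))%R.
  by rewrite sumrB !sum_pt.
by move=> l _; rewrite dv mulrBr.
Qed.

Lemma flow_in_edges n (w : V B n.+1) i : 2 < n -> w \in Vo P n.+1 ->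
  net_flow (@tail_label n) (@head_label n) (in_edges w) i =
  (b2z (i == dplus w) - b2z (i == dminus w))%R.
Proof.
move=> n_gt2 wVo; have n_gt0 : 0 < n by apply: ltnW (ltnW n_gt2).
rewrite -(d_Vo (ltn0Sn n) wVo).1 (d_thread i n_gt0 wVo) net_flow_sum /in_edges big_filter.
rewrite (partition_big (@src B n) predT) // [RHS]big_mkcond /=; apply: eq_bigr => v _.
rewrite (eq_bigr (fun _ => if in_cell v then 0%R else d i n v)); last first.
  move=> e /andP[_ /eqP <-]; case: (boolP (in_cell (src e))) => Ie.
    by have [-> ->] := labels_in_cell Ie; rewrite subrr.
  have [-> ->] := labels_Vo (negbT (gtn_eqF n_gt2)) Ie.
  by rewrite ((d_Vo n_gt0 (_ : src e \in Vo P n)).1 i) ?in_Vo // ![_ == i]eq_sym.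
rewrite big_enum_cond /= (eq_bigl (mem [set e : E B n | (src e == v) && (rng e == w)])).
  by rewrite sumr_const -mulr_natl natz in_Vo; case: (in_cell v); rewrite ?mulr0.
by move=> e; rewrite !inE andbC.
Qed.

(* A cut [A] is crossed because the thread with coefficients [l \in A] is not zero. *)
Lemma cut_in_edges n (w : V B n.+1) (A : {set 'I_k}) : 0 < n -> n != 2 -> w \in Vo P n.+1 ->
  A != set0 -> A != setT -> exists e, [/\ e \in in_edges w, ~~ in_cell (src e) &
    (tail_label e \in A) != (head_label e \in A)].
Proof.
move=> n_gt0 n_neq2 wVo /set0Pn[i1 i1A] AT.
have [i2 i2A] : exists i2, i2 \notin A.
  apply: NNPP => H; move/negP: AT; apply; apply/eqP/setP => x; rewrite inE.
  by apply/idP; apply: NNPP => Hx; apply: H; exists x; apply/negP.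
pose cA l := b2z (l \in A).
have [v [vVo Hnz]] : exists v, v \in Vo P n /\ (\sum_(l < k) cA l * d l n v != 0)%R.
  apply: NNPP => H; have Hz : lim_zero P (fun n v => \sum_(l < k) cA l * d l n v)%R.
    exists n; split => // v vVo; apply/eqP; apply: NNPP => Hz.
    by apply: H; exists v; split => //; apply/negP.
  by have := proj1 (d_indep cA) Hz i1 i2; rewrite /cA i1A (negbTE i2A).
have [e ew Es] := in_edge_from v n_gt0 wVo.
have Ie : ~~ in_cell (src e) by rewrite Es -in_Vo.
exists e; split => //; have [-> ->] := labels_Vo n_neq2 Ie.
move: Hnz; rewrite (sum_d_Vo _ n_gt0 vVo) Es /cA /b2z.
by case: (dplus v \in A); case: (dminus v \in A).
Qed.

Definition funnel_ok n (w : V B n.+1) (s : seq (E B n)) :=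
  forall i j, w \in P n.+1 i -> g i j < n.+1 <= g i j.+1 -> reach (u i j) w ->
    (if odd j then @head_sat _ else @last_sat _) (fun e : E B n => reach (u i j) (src e)) s.

Definition euler_ok n (w : V B n.+1) (s : seq (E B n)) :=
  [/\ sorted (chained (@tail_label n) (@head_label n)) s,
      head_sat (fun e => tail_label e = dminus w) s,
      last_sat (fun e => head_label e = dplus w) s &
      (if odd n then @last_sat _ else @head_sat _) (fun e : E B n => in_cell (src e)) s].

(* The order on [r^-1 w] will be the order of an admissible list [s].  In a cell the
   extreme edge on the side given by the parity of [j] stays in the funnel of [u i j];
   in [V_o] at levels [>= 4] consecutive edges have matching labels, so that the
   successor of a maximal path starts a minimal path into the same cell. *)
Definition admissible n (w : V B n.+1) (s : seq (E B n)) : Prop :=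
  if n == 0 then True else
  if in_cell w then funnel_ok w s else
  if n == 1 then last_sat (fun e : E B n => src e \in P n i0) s else
  if n == 2 then head_sat (fun e : E B n => src e \in P n (dminus w)) s /\
    last_sat (fun e : E B n => src e \in P n (dplus w) \/ dplus w = dminus w /\ src e \in Vo P n) s
  else euler_ok w s.

Lemma funnel_ok_exists n (w : V B n.+1) : 0 < n -> in_cell w ->
  exists2 s, perm_eq s (in_edges w) & funnel_ok w s.
Proof.
move=> n_gt0 Iw; set i := cell w; have wi : w \in P n.+1 i := mem_cell Iw.
case: (classic (exists j, g i j < n.+1 <= g i j.+1 /\ reach (u i j) w)); last first.
  move=> No; exists (in_edges w) => // i' j wi'; rewrite (cell_inj (ltn0Sn n) wi' wi) => Hj Hr.
  by exfalso; apply: No; exists j.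
case=> j [Hj Hr]; have gj_le : g i j <= n by rewrite -ltnS; case/andP: Hj.
have [e Re He] := reach_last_edge Hr gj_le.
have ew : e \in in_edges w by rewrite mem_in_edges Re.
have [s Ps Hs] : exists2 s, perm_eq s (in_edges w) &
    (if odd j then @head_sat _ else @last_sat _) (fun e : E B n => reach (u i j) (src e)) s.
  by case: (odd j); [apply: perm_head_sat ew He | apply: perm_last_sat ew He].
exists s => // i' j' wi'; rewrite (cell_inj (ltn0Sn n) wi' wi) => Hj'.
by rewrite -(g_segment_uniq Hj Hj').
Qed.

Lemma level2_exists (w : V B 2) : w \in Vo P 2 ->
  exists2 s, perm_eq s (in_edges w) & last_sat (fun e : E B 1 => src e \in P 1 i0) s.
Proof.
move=> wVo; have [v vi0] := cell_nonempty i0 (ltn0Sn 0).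
have [e ew Es] := in_edge_from v (ltn0Sn 0) wVo.
by apply: perm_last_sat ew _; rewrite Es.
Qed.

Lemma level3_exists (w : V B 3) : w \in Vo P 3 -> exists2 s, perm_eq s (in_edges w) &
  head_sat (fun e : E B 2 => src e \in P 2 (dminus w)) s /\
  last_sat (fun e : E B 2 => src e \in P 2 (dplus w) \/ dplus w = dminus w /\ src e \in Vo P 2) s.
Proof.
move=> wVo; set a := dplus w; set b := dminus w.
have [vb vbb] := cell_nonempty b (isT : 0 < 2); have [e1 e1w Es1] := in_edge_from vb isT wVo.
have e1b : src e1 \in P 2 b by rewrite Es1.
(* When [a = b] the last edge may also come from [V_o]; such an edge exists as soon as
   some edge comes from a cell other than [a], because then [k > 1]. *)
have [[e2 [e2w N12 qe2]]|[Eab single]] : (exists e2, [/\ e2 \in in_edges w, e1 != e2 &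
    src e2 \in P 2 a \/ a = b /\ src e2 \in Vo P 2]) \/ a = b /\ perm_eq [:: e1] (in_edges w).
- case: (eqVneq a b) => [Eab|Nab].
    case E: (rem e1 (in_edges w)) => [|e re].
      by right; split => //; rewrite perm_sym -E perm_to_rem.
    have : e \in rem e1 (in_edges w) by rewrite E mem_head.
    rewrite (mem_rem_uniq e1 (uniq_in_edges w)) inE => /andP[Ne ew]; left.
    case: (boolP (in_cell (src e))) => [Ie|]; last first.
      by rewrite -in_Vo => eVo; exists e; split; rewrite 1?eq_sym //; right.
    case: (eqVneq (cell (src e)) a) => [Ea|Na].
      by exists e; split; rewrite 1?eq_sym //; left; rewrite -Ea mem_cell.
    have [v vVo] := Vo_nonempty (isT : 0 < 2) Na; have [e' e'w Es'] := in_edge_from v isT wVo.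
    exists e'; split => //; last by right; rewrite Es'.
    by apply/eqP => E1'; move: vVo; rewrite -Es' -E1' Es1 in_Vo (in_cellI vbb).
  left; have [va vaa] := cell_nonempty a (isT : 0 < 2).
  have [e2 e2w Es2] := in_edge_from va isT wVo.
  exists e2; split => //; last by left; rewrite Es2.
  apply/eqP => E12; have vab : va \in P 2 b by rewrite -Es2 -E12.
  by move: Nab; rewrite (cell_inj (ltn0Sn 1) vaa vab) eqxx.
- exact: perm_head_last_sat (uniq_in_edges w) N12 e1w e2w e1b qe2.
- by exists [:: e1]; last by split => //=; left; rewrite Eab.
Qed.

Lemma euler_ok_exists n (w : V B n.+1) : 2 < n -> w \in Vo P n.+1 ->
  exists2 s, perm_eq s (in_edges w) & euler_ok w s.
Proof.
(* An edge [l] from the cell [c] is a loop at [c]: the other edges form an Euler trail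
   from [b] to [a], and [l] is put last or first according to the parity of [n]. *)
move=> n_gt2 wVo; have n_gt0 : 0 < n by apply: ltnW (ltnW n_gt2).
set a := dplus w; set b := dminus w; pose c := if odd n then a else b.
have [vl vlc] := cell_nonempty c n_gt0; have [l lw Esl] := in_edge_from vl n_gt0 wVo.
have lc : src l \in P n c by rewrite Esl.
have [tl hl] : tail_label l = c /\ head_label l = c.
  by have [-> ->] := labels_in_cell (in_cellI lc); rewrite (cellE n_gt0 lc).
have flow i : net_flow (@tail_label n) (@head_label n) (rem l (in_edges w)) i =
    (b2z (i == a) - b2z (i == b))%R.
  rewrite -(flow_in_edges i n_gt2 wVo) (perm_net_flow _ _ i (perm_to_rem lw)).
  by rewrite net_flow_cons tl hl subrr add0r.
have cut A : A != set0 -> A != setT ->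
    has (fun e => (tail_label e \in A) != (head_label e \in A)) (rem l (in_edges w)).
  move=> A0 AT; have [e [ew Ie cross]] := cut_in_edges n_gt0 (negbT (gtn_eqF n_gt2)) wVo A0 AT.
  apply/hasP; exists e => //; rewrite (mem_rem_uniq l (uniq_in_edges w)) inE ew andbT.
  by apply: contraNneq Ie => ->; apply: in_cellI lc.
have [s0 [Ps0 Ss0 Es0]] := euler_trail_exists i0 flow cut.
have Pl : perm_eq (l :: s0) (in_edges w).
  by rewrite perm_sym (perm_trans (perm_to_rem lw)) // perm_cons perm_sym.
have Il : in_cell (src l) := in_cellI lc.
case Eo: (odd n); rewrite /c Eo in tl hl.
  exists (rcons s0 l); first by rewrite perm_rcons.
  rewrite /euler_ok Eo; case: s0 Ss0 Es0 {Ps0 Pl} => [|t s0'] /= Ss0 Es0.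
    by split; rewrite //= ?tl ?hl.
  case: Es0 => Est Een; split; rewrite ?last_rcons //.
  by rewrite rcons_path Ss0 /chained /= Een tl eqxx.
exists (l :: s0) => //; rewrite /euler_ok Eo; case: s0 Ss0 Es0 {Ps0 Pl} => [|t s0'] /= Ss0 Es0.
  by split; rewrite //= ?tl ?hl.
by case: Es0 => Est Een; split => //=; rewrite /chained hl Est eqxx Ss0.
Qed.

Lemma admissible_exists n (w : V B n.+1) : exists s, perm_eq s (in_edges w) /\ admissible w s.
Proof.
suff [s Ps As] : exists2 s, perm_eq s (in_edges w) & admissible w s by exists s.
rewrite /admissible; case: n w => [|[|[|n]]] w /=; first by exists (in_edges w).
all: case: (boolP (in_cell w)) => [Iw|]; first exact: funnel_ok_exists.
all: rewrite -in_Vo => wVo.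
- exact: level2_exists.
- exact: level3_exists.
- exact: euler_ok_exists.
Qed.

Definition edge_list n (w : V B n.+1) : seq (E B n) :=
  sval (constructive_indefinite_description _ (admissible_exists w)).

Lemma edge_listP n (w : V B n.+1) :
  perm_eq (edge_list w) (in_edges w) /\ admissible w (edge_list w).
Proof. exact: (svalP (constructive_indefinite_description _ (admissible_exists w))). Qed.

Lemma mem_edge_list n (w : V B n.+1) e : (e \in edge_list w) = (rng e == w).
Proof. by rewrite (perm_mem (edge_listP w).1) mem_in_edges. Qed.

Lemma uniq_edge_list n (w : V B n.+1) : uniq (edge_list w).
Proof. by rewrite (perm_uniq (edge_listP w).1) uniq_in_edges. Qed.

Definition edge_lt n : rel (E B n) := fun e f =>
  (rng e == rng f) && (index e (edge_list (rng f)) < index f (edge_list (rng f))).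

Lemma edge_lt_order : is_order edge_lt.
Proof.
move=> n e f h; split.
- by case/andP => /eqP.
- by rewrite /edge_lt ltnn andbF.
- rewrite /edge_lt => /andP[/eqP E1 H1] /andP[/eqP E2 H2]; rewrite E1 E2 eqxx /=.
  by rewrite E2 in H1; apply: ltn_trans H1 H2.
- move=> E; rewrite /edge_lt E eqxx /=.
  case: ltngtP; rewrite ?orbT // => Hi; apply/orP; left; apply/eqP.
  have ef : e \in edge_list (rng f) by rewrite mem_edge_list E.
  have ff : f \in edge_list (rng f) by rewrite mem_edge_list.
  by rewrite -(nth_index e ef) Hi (nth_index e ff).
Qed.

Lemma edge_into_ex n (w : V B n.+1) : exists e : E B n, rng e = w.
Proof. exact: rng_surj. Qed.

Definition edge_into n (w : V B n.+1) : E B n :=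
  sval (constructive_indefinite_description _ (edge_into_ex w)).

Lemma rng_edge_into n (w : V B n.+1) : rng (edge_into w) = w.
Proof. exact: (svalP (constructive_indefinite_description _ (edge_into_ex w))). Qed.

(* [extreme_edge true w] is the maximal and [extreme_edge false w] the minimal edge into [w]. *)
Definition extreme_edge (b : bool) n (w : V B n.+1) : E B n :=
  if b then last (edge_into w) (edge_list w) else head (edge_into w) (edge_list w).

Lemma edge_list_cons n (w : V B n.+1) : exists e s, edge_list w = e :: s.
Proof.
case E: (edge_list w) => [|e s]; last by exists e, s.
by have := mem_edge_list w (edge_into w); rewrite E rng_edge_into eqxx.
Qed.

Lemma rng_extreme_edge b n (w : V B n.+1) : rng (extreme_edge b w) = w.
Proof.
apply/eqP; rewrite -mem_edge_list /extreme_edge; have [e [s ->]] := edge_list_cons w.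
by case: b => /=; [apply: mem_last | apply: mem_head].
Qed.

Lemma head_sat_extreme n (p : E B n -> Prop) (w : V B n.+1) :
  head_sat p (edge_list w) -> p (extreme_edge false w).
Proof. by rewrite /extreme_edge; case: (edge_list w). Qed.

Lemma last_sat_extreme n (p : E B n -> Prop) (w : V B n.+1) :
  last_sat p (edge_list w) -> p (extreme_edge true w).
Proof. by rewrite /extreme_edge; case: (edge_list w). Qed.

Lemma is_maxE n (e : E B n) : is_max edge_lt e <-> e = extreme_edge true (rng e).
Proof.
have Hmax (f : E B n) : rng f = rng e -> f = extreme_edge true (rng e) \/
    edge_lt f (extreme_edge true (rng e)).
  move=> Ef; rewrite /edge_lt rng_extreme_edge Ef eqxx /= /extreme_edge.
  have [x [s Es]] := edge_list_cons (rng e); have := uniq_edge_list (rng e).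
  have : f \in edge_list (rng e) by rewrite mem_edge_list Ef.
  rewrite Es => fin Hu; rewrite (index_last Hu).
  have : index f (x :: s) < (size s).+1 by rewrite index_mem.
  rewrite ltnS leq_eqVlt => /orP[/eqP Ei|]; last by right.
  by left; rewrite -(nth_index x fin) Ei -(index_last Hu) nth_index // mem_last.
split => [He|->]; last by move=> f; rewrite rng_extreme_edge; apply: Hmax.
have [//|/andP[_ L]] := He _ (rng_extreme_edge true (rng e)).
case: (Hmax e erefl) => [//|/andP[_ L2]]; rewrite rng_extreme_edge in L2.
by have := ltn_trans L L2; rewrite ltnn.
Qed.

Lemma is_minE n (e : E B n) : is_min edge_lt e <-> e = extreme_edge false (rng e).
Proof.
have Hmin (f : E B n) : rng f = rng e -> f = extreme_edge false (rng e) \/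
    edge_lt (extreme_edge false (rng e)) f.
  move=> Ef; rewrite /edge_lt rng_extreme_edge Ef eqxx /= /extreme_edge.
  have [x [s Es]] := edge_list_cons (rng e); rewrite Es /= eqxx.
  by case: (eqVneq x f) => [->|N]; [left | right].
split => [He|->]; last by move=> f; rewrite rng_extreme_edge => /Hmin [->|]; [left | right].
have [/esym //|/andP[_ L]] := He _ (rng_extreme_edge false (rng e)).
case: (Hmin e erefl) => [//|/andP[_ L2]]; rewrite rng_extreme_edge in L, L2.
by have := ltn_trans L L2; rewrite ltnn.
Qed.

Lemma succ_chained n (e f : E B n) : is_succ edge_lt e f ->
  sorted (chained (@tail_label n) (@head_label n)) (edge_list (rng e)) ->
  head_label e = tail_label f.
Proof.
case=> Ef Lef Hg Hs; set w := rng e in Ef Lef Hg Hs *.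
have Hu := uniq_edge_list w.
have ein : e \in edge_list w by rewrite mem_edge_list.
move: Lef; rewrite /edge_lt Ef eqxx /= => Lef.
have Hi : (index e (edge_list w)).+1 < size (edge_list w).
  by apply: leq_ltn_trans Lef _; rewrite index_mem mem_edge_list Ef.
set h := nth e (edge_list w) (index e (edge_list w)).+1.
have Ih : index h (edge_list w) = (index e (edge_list w)).+1 by apply: index_uniq.
have Rh : rng h = w by apply/eqP; rewrite -mem_edge_list mem_nth.
have Eh : h = f.
  have Leh : edge_lt e h by rewrite /edge_lt Rh eqxx /= Ih.
  case: (Hg h Rh Leh) => // /andP[_]; rewrite Rh Ih ltnS => L.
  by have := leq_trans Lef L; rewrite ltnn.
by have /eqP := (sortedP e Hs) _ Hi; rewrite -/h Eh nth_index.
Qed.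

(* The vertices at which [plus_label] (resp. [minus_label]) computes [m_+] (resp. [m_-]). *)
Definition max_labelled n (v : V B n) := (0 < n) && (in_cell v || (1 < n)).
Definition min_labelled n (v : V B n) := (0 < n) && (in_cell v || (2 < n)).

Lemma admissible_Vo n (w : V B n.+1) : 0 < n -> ~~ in_cell w ->
  if n == 1 then last_sat (fun e : E B n => src e \in P n i0) (edge_list w) else
  if n == 2 then head_sat (fun e : E B n => src e \in P n (dminus w)) (edge_list w) /\
    last_sat (fun e : E B n => src e \in P n (dplus w) \/ dplus w = dminus w /\ src e \in Vo P n)
      (edge_list w)
  else euler_ok w (edge_list w).
Proof.
by move=> n_gt0 Iw; have := (edge_listP w).2; rewrite /admissible (gtn_eqF n_gt0) (negbTE Iw).
Qed.

Lemma edge_list_chained n (w : V B n.+1) : 2 < n -> ~~ in_cell w ->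
  sorted (chained (@tail_label n) (@head_label n)) (edge_list w).
Proof. by case: n w => [|[|[|n]]] // w _ /(admissible_Vo (ltn0Sn _)) []. Qed.

Lemma plus_label_max_step n (w : V B n.+1) (e := extreme_edge true w) : 0 < n ->
  max_labelled (src e) /\ plus_label (src e) = plus_label w.
Proof.
rewrite {}/e; case: (boolP (in_cell w)) => Iw n_gt0.
  have es : src (extreme_edge true w) \in P n (cell w).
    by apply: cell_src n_gt0 _; rewrite rng_extreme_edge mem_cell.
  by rewrite /max_labelled /plus_label n_gt0 (in_cellI es) Iw (cellE n_gt0 es).
have wVo : w \in Vo P n.+1 by rewrite in_Vo.
move: (admissible_Vo n_gt0 Iw) wVo; case: n w Iw n_gt0 => [|[|[|n]]] // w Iw _ /=.
- move/last_sat_extreme => es _.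
  by rewrite /max_labelled /plus_label (in_cellI es) (negbTE Iw) (cellE _ es).
- case=> _ /last_sat_extreme [es|[Eab]] ; last rewrite in_Vo => /negbTE Ies wVo.
    by rewrite /max_labelled /plus_label (in_cellI es) (negbTE Iw) (cellE _ es).
  by rewrite /max_labelled /plus_label Ies (negbTE Iw) /= ((d_Vo _ wVo).2 Eab).
- case=> _ _ /last_sat_extreme; rewrite /head_label => -> _ _.
  by rewrite /max_labelled /plus_label (negbTE Iw) /= orbT.
Qed.

Lemma minus_label_min_step n (w : V B n.+1) (e := extreme_edge false w) : 0 < n ->
  min_labelled w -> min_labelled (src e) /\ minus_label (src e) = minus_label w.
Proof.
rewrite {}/e; case: (boolP (in_cell w)) => Iw n_gt0 Lw.
  have es : src (extreme_edge false w) \in P n (cell w).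
    by apply: cell_src n_gt0 _; rewrite rng_extreme_edge mem_cell.
  by rewrite /min_labelled /minus_label n_gt0 (in_cellI es) Iw (cellE n_gt0 es).
move: Lw (admissible_Vo n_gt0 Iw); rewrite /min_labelled (negbTE Iw) /=.
case: n w Iw n_gt0 => [|[|[|n]]] // w Iw _ _ /=.
- case=> /head_sat_extreme es _.
  by rewrite /minus_label (in_cellI es) (negbTE Iw) (cellE _ es).
- case=> _ /head_sat_extreme; rewrite /tail_label => -> _.
  by rewrite /min_labelled /minus_label (negbTE Iw) /= orbT.
Qed.

Lemma plus_label_down N (x : V B N) m (y : V B m) : down (@is_max B edge_lt) x y ->
  0 < m -> max_labelled x -> max_labelled y /\ plus_label y = plus_label x.
Proof.
elim => [//|n e m' y' /is_maxE emax Hd IH m_gt0 Lx].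
have n_gt0 := leq_trans m_gt0 (down_leq Hd).
have [Ls Es] := plus_label_max_step (rng e) n_gt0; rewrite -emax in Ls Es.
by rewrite -Es; apply: IH.
Qed.

Lemma minus_label_down N (x : V B N) m (y : V B m) : down (@is_min B edge_lt) x y ->
  0 < m -> min_labelled x -> min_labelled y /\ minus_label y = minus_label x.
Proof.
elim => [//|n e m' y' /is_minE emin Hd IH m_gt0 Lx].
have n_gt0 := leq_trans m_gt0 (down_leq Hd).
have [Ls Es] := minus_label_min_step n_gt0 Lx; rewrite -emin in Ls Es.
by rewrite -Es; apply: IH.
Qed.

Lemma mplus_plus_label n (v : V B n) : max_labelled v -> mplus P edge_lt v (plus_label v).
Proof.
elim: n v => [|[|n] IH] v; rewrite /max_labelled //= ?orbF => Lv.
  by exists v; split; [apply: down_refl | rewrite /plus_label Lv mem_cell].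
have [Ls Es] := plus_label_max_step v (ltn0Sn n).
have [a [Hd Ha]] := IH _ Ls; exists a; split; last by rewrite -Es.
rewrite -{1}(rng_extreme_edge true v); apply: down_step Hd.
by apply/is_maxE; rewrite rng_extreme_edge.
Qed.

Lemma mminus_minus_label n (v : V B n) : min_labelled v -> mminus P edge_lt v (minus_label v).
Proof.
elim: n v => [|[|n] IH] v Lv; first by [].
  move: Lv; rewrite /min_labelled /= orbF => Iv.
  by exists v; split; [apply: down_refl | rewrite /minus_label Iv mem_cell].
have [Ls Es] := minus_label_min_step (ltn0Sn n) Lv.
have [a [Hd Ha]] := IH _ Ls; exists a; split; last by rewrite -Es.
rewrite -{1}(rng_extreme_edge false v); apply: down_step Hd.
by apply/is_minE; rewrite rng_extreme_edge.
Qed.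

Lemma mplus_uniq n (v : V B n) i : mplus P edge_lt v i -> max_labelled v -> i = plus_label v.
Proof.
case=> a [Hd Ha] Lv; have [La <-] := plus_label_down Hd (ltn0Sn 0) Lv.
by move: La; rewrite /max_labelled /= orbF => Ia; rewrite /plus_label Ia (cellE _ Ha).
Qed.

Lemma funnel_ok_edge_list n (w : V B n.+1) : 0 < n -> in_cell w -> funnel_ok w (edge_list w).
Proof. by move=> n_gt0 Iw; have := (edge_listP w).2; rewrite /admissible (gtn_eqF n_gt0) Iw. Qed.

(* Vertices of all levels are packed as dependent pairs so that the step down along
   the extreme edges can be iterated. *)
Definition descend (b : bool) (p : {n : nat & V B n}) : {n : nat & V B n} :=
  match p with existT n v =>
    match n as n0 return V B n0 -> {n : nat & V B n} with
    | 0 => fun v => vtx v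
    | S t => fun w => vtx (src (extreme_edge b w))
    end v
  end.

Lemma descend_vtx b t (w : V B t.+1) : descend b (vtx w) = vtx (src (extreme_edge b w)).
Proof. by []. Qed.

Lemma iter_descend_level b m p : projT1 (iter m (descend b) p) = projT1 p - m.
Proof.
elim: m => [|m IH]; first by rewrite subn0.
by rewrite iterS subnS -IH; case: (iter m (descend b) p) => [[|t] w].
Qed.

Definition pcell i (p : {n : nat & V B n}) := let: existT n v := p in v \in P n i.

Lemma descend_cell b i p : pcell i p -> 1 < projT1 p -> pcell i (descend b p).
Proof.
case: p => [[|[|t]] w] //= wi _; apply: (@cell_src t.+1 i (extreme_edge b w) isT).
by rewrite rng_extreme_edge.
Qed.

Lemma iter_descend_cell b i m p : pcell i p -> m < projT1 p -> pcell i (iter m (descend b) p).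
Proof.
move=> pi; elim: m => [|m IH] Hm //; rewrite iterS; apply: descend_cell.
  exact/IH/ltnW.
by rewrite iter_descend_level ltn_subRL addn1.
Qed.

Lemma descend_funnel i j t (y : V B t) : g i j <= t <= g i j.+1 -> y \in P t i ->
  reach (u i j) y -> iter (t - g i j) (descend (~~ odd j)) (vtx y) = vtx (u i j).
Proof.
elim: t y => [|t IH] y.
  by rewrite leqn0 => /andP[/eqP E]; exfalso; move: (g_gt0 i j); rewrite E.
case/andP => H1 H2 yi Hr; case: (eqVneq t.+1 (g i j)) => [E|N].
  have -> : t.+1 - g i j = 0 by rewrite E subnn.
  by rewrite /= (reach_same_level Hr (esym E)).
have Lt : g i j < t.+1 by rewrite ltn_neqAle eq_sym N H1.
have t_gt0 : 0 < t by apply: leq_trans (g_gt0 i j) _; rewrite -ltnS.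
have Hsel : reach (u i j) (src (extreme_edge (~~ odd j) y)).
  have /(_ i j yi) := funnel_ok_edge_list t_gt0 (in_cellI yi); rewrite Lt H2 => /(_ isT Hr).
  by case: (odd j) => /=; [apply: head_sat_extreme | apply: last_sat_extreme].
have Hs : src (extreme_edge (~~ odd j) y) \in P t i.
  by apply: cell_src t_gt0 _; rewrite rng_extreme_edge.
have -> : t.+1 - g i j = (t - g i j).+1 by rewrite subSn // -ltnS.
rewrite iterSr descend_vtx; apply: IH => //.
by rewrite -ltnS Lt (leq_trans (leqnSn t) H2).
Qed.

Lemma descend_to_u i j (y : V B (g i j.+1)) : y \in P (g i j.+1) i ->
  iter (g i j.+1 - g i j) (descend (~~ odd j)) (vtx y) = vtx (u i j).
Proof.
move=> yi; apply: descend_funnel => //; last exact: reach_u.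
by rewrite leqnn andbT ltnW // g_lt.
Qed.

Lemma descend_u2 b i j : ~~ odd j = b ->
  iter (g i j.+2 - g i j) (descend b) (vtx (u i j.+2)) = vtx (u i j).
Proof.
move=> Hb; have L1 := g_lt i j; have L2 := g_lt i j.+1.
have -> : g i j.+2 - g i j = (g i j.+1 - g i j) + (g i j.+2 - g i j.+1).
  by rewrite addnC addnBA ?subnK // ltnW.
rewrite iterD.
have := iter_descend_level b (g i j.+2 - g i j.+1) (vtx (u i j.+2)).
have := @iter_descend_cell b i (g i j.+2 - g i j.+1) (vtx (u i j.+2)) (u_cell i j.+2).
case: (iter _ _ _) => l y Hi Hl.
change (l = g i j.+2 - (g i j.+2 - g i j.+1)) in Hl.
rewrite subKn in Hl; last exact: ltnW.
subst l; have yi : y \in P (g i j.+1) i.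
  by apply: Hi; change (g i j.+2 - g i j.+1 < g i j.+2); rewrite ltn_subrL !g_gt0.
by rewrite -Hb; apply: descend_to_u.
Qed.

(* The extremal path [z_{i,b}] passes through [u i j] for all [j] with [~~ odd j = b];
   [zidx b n] is such a [j] with [n < g i j]. *)
Definition zidx (b : bool) n := n.*2.+1 + b.

Lemma odd_zidx b n : ~~ odd (zidx b n) = b.
Proof. by rewrite /zidx oddD /= odd_double; case: b. Qed.

Lemma zidxS b n : zidx b n.+1 = (zidx b n).+2.
Proof. by rewrite /zidx doubleS. Qed.

Lemma zidx_gt b i n : n < g i (zidx b n).
Proof. by apply: leq_ltn_trans (g_ge i _); rewrite /zidx; lia. Qed.

Definition zvertex b i n := iter (g i (zidx b n) - n) (descend b) (vtx (u i (zidx b n))).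

Lemma zvertex_level b i n : projT1 (zvertex b i n) = n.
Proof. by rewrite iter_descend_level /= subKn // ltnW // zidx_gt. Qed.

Lemma descend_zvertex b i n : descend b (zvertex b i n.+1) = zvertex b i n.
Proof.
rewrite /zvertex zidxS -iterS.
have G1 := zidx_gt b i n; have G3 := g_lt i (zidx b n); have G2 := g_lt i (zidx b n).+1.
have -> : (g i (zidx b n).+2 - n.+1).+1 =
    (g i (zidx b n) - n) + (g i (zidx b n).+2 - g i (zidx b n)) by lia.
by rewrite iterD descend_u2 // odd_zidx.
Qed.

Lemma zpath_ex b i n : exists e : E B n,
  vtx (rng e) = zvertex b i n.+1 /\ e = extreme_edge b (rng e).
Proof.
have := zvertex_level b i n.+1; case: (zvertex b i n.+1) => l w /= El; subst l.
by exists (extreme_edge b w); rewrite rng_extreme_edge.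
Qed.

Definition zpath b i n := sval (constructive_indefinite_description _ (zpath_ex b i n)).

Lemma zpathP b i n : vtx (rng (zpath b i n)) = zvertex b i n.+1 /\
  zpath b i n = extreme_edge b (rng (zpath b i n)).
Proof. exact: (svalP (constructive_indefinite_description _ (zpath_ex b i n))). Qed.

Lemma zpath_src b i n : vtx (src (zpath b i n)) = zvertex b i n.
Proof. by have [E1 E2] := zpathP b i n; rewrite {1}E2 -descend_vtx E1 descend_zvertex. Qed.

Lemma zpath_ipath b i : ipath (zpath b i).
Proof. by move=> n; apply: vtx_inj; rewrite zpath_src (zpathP b i n).1. Qed.

Lemma zpath_cell b i n : 0 < n -> src (zpath b i n) \in P n i.
Proof.
move=> n_gt0.
have := @iter_descend_cell b i (g i (zidx b n) - n) (vtx (u i (zidx b n))) (u_cell i _).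
rewrite -/(zvertex b i n) -zpath_src; apply.
by change (g i (zidx b n) - n < g i (zidx b n)); rewrite ltn_subrL n_gt0 g_gt0.
Qed.

Lemma extreme_in_cell_Vo b n (w : V B n.+1) : 0 < n -> odd n = b -> w \in Vo P n.+1 ->
  in_cell (src (extreme_edge b w)).
Proof.
move=> n_gt0 <-; rewrite in_Vo => /(admissible_Vo n_gt0).
case: n w n_gt0 => [|[|[|n]]] // w _ /=.
- by move/last_sat_extreme/in_cellI.
- by case=> /head_sat_extreme/in_cellI.
- by case=> _ _ _; rewrite /= !negbK; case: (odd n) => /= [/head_sat_extreme|/last_sat_extreme].
Qed.

(* By the parity condition in [euler_ok], extreme edges leave [V_o] at infinitely many levels. *)
Lemma extreme_in_cell_often b N : exists n, [/\ N <= n, 0 < n &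
  forall w : V B n.+1, w \in Vo P n.+1 -> in_cell (src (extreme_edge b w))].
Proof.
case: b; [exists N.*2.+1 | exists N.*2.+2]; split => //; try lia;
  by move=> w; apply: extreme_in_cell_Vo; rewrite //= odd_double.
Qed.

Section ExtremePath.
Variables (b : bool) (x : forall n, E B n).
Hypotheses (x_path : ipath x) (x_extreme : forall n, x n = extreme_edge b (rng (x n))).

Lemma extreme_path_descend t : vtx (src (x t)) = descend b (vtx (src (x t.+1))).
Proof. by rewrite -(x_path t) {1}(x_extreme t). Qed.

Lemma extreme_path_iter m t : vtx (src (x t)) = iter m (descend b) (vtx (src (x (t + m)))).
Proof.
elim: m t => [|m IH] t; first by rewrite addn0.
by rewrite iterS -addSnnS -(IH t.+1) -extreme_path_descend.
Qed.

Lemma extreme_path_leq t T : t <= T ->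
  vtx (src (x t)) = iter (T - t) (descend b) (vtx (src (x T))).
Proof. by move=> H; have := extreme_path_iter (T - t) t; rewrite subnKC. Qed.

Lemma extreme_path_in_cell n : 0 < n -> in_cell (src (x n)).
Proof.
move=> n_gt0; apply: contraT => Nn.
have Vo_above t : n <= t -> ~~ in_cell (src (x t)).
  elim: t => [|t IH]; first by rewrite leqn0 => /eqP E; move: n_gt0; rewrite E.
  rewrite leq_eqVlt => /orP[/eqP <- //|Lt]; apply: contra (IH Lt) => I.
  by apply: in_cell_src (leq_trans n_gt0 Lt) _; rewrite (x_path t).
have [m [Hm m_gt0 Hw]] := extreme_in_cell_often b n.
have wVo : rng (x m) \in Vo P m.+1 by rewrite in_Vo (x_path m) Vo_above // leqW.
by move: (Vo_above m Hm); rewrite {1}(x_extreme m) Hw.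
Qed.

Lemma extreme_path_cell : exists i, forall n, 0 < n -> src (x n) \in P n i.
Proof.
exists (cell (src (x 1))); case=> // n _; elim: n => [|n IH].
  exact/mem_cell/extreme_path_in_cell.
have H := mem_cell (extreme_path_in_cell (ltn0Sn n.+1)).
have H' : src (x n.+1) \in P n.+1 (cell (src (x n.+2))).
  by apply: cell_src => //; rewrite (x_path n.+1).
by rewrite -(cell_inj (ltn0Sn n) IH H') in H.
Qed.

Lemma extreme_path_zpath : exists i, forall n, x n = zpath b i n.
Proof.
have [i xi] := extreme_path_cell; exists i => n.
have Hf := descend_to_u (xi _ (g_gt0 i (zidx b n.+1).+1)).
rewrite odd_zidx in Hf.
have Hl := extreme_path_leq (ltnW (g_lt i (zidx b n.+1))).
rewrite Hf in Hl.
have Hl2 := extreme_path_leq (ltnW (zidx_gt b i n.+1)).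
rewrite Hl -/(zvertex b i n.+1) -(zpathP b i n).1 -(x_path n) in Hl2.
by rewrite (x_extreme n) (vtx_inj Hl2) -(zpathP b i n).2.
Qed.

End ExtremePath.

Lemma zpath_extremal : exists zmax zmin : 'I_k -> forall n, E B n,
  [/\ (forall i, ipath (zmax i) /\ ipath (zmin i)),
      (forall i n, 0 < n -> src (zmax i n) \in P n i /\ src (zmin i n) \in P n i),
      (forall x, ipath x ->
         ((forall n, is_max edge_lt (x n)) <-> exists i, forall n, x n = zmax i n))
    & (forall x, ipath x ->
         ((forall n, is_min edge_lt (x n)) <-> exists i, forall n, x n = zmin i n))].
Proof.
exists (zpath true), (zpath false); split.
- by move=> i; split; apply: zpath_ipath.
- by move=> i n n_gt0; split; apply: zpath_cell.
- move=> x xp; split => [xmax|[i xi] n].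
    by apply: extreme_path_zpath xp _ => n; apply/is_maxE.
  by rewrite xi; apply/is_maxE; apply: (zpathP true i n).2.
- move=> x xp; split => [xmin|[i xi] n].
    by apply: extreme_path_zpath xp _ => n; apply/is_minE.
  by rewrite xi; apply/is_minE; apply: (zpathP false i n).2.
Qed.

Lemma labels_defined n (v : V B n) : 4 <= n ->
  mplus P edge_lt v (plus_label v) /\ mminus P edge_lt v (minus_label v).
Proof.
move=> n_ge4; split; [apply: mplus_plus_label | apply: mminus_minus_label].
  by rewrite /max_labelled (leq_trans _ n_ge4) // (leq_trans _ n_ge4) ?orbT.
by rewrite /min_labelled (leq_trans _ n_ge4) // (leq_trans _ n_ge4) ?orbT.
Qed.

(* Condition (3a): the successor of the maximal path through [v] continues, below the
   non-maximal edge [f], along the minimal path from [src f'], and the Euler-trail order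
   makes the label [head_label f = tail_label f'] common to both. *)
Lemma succ_max_min n (v : V B n) j (u0 : V B j) (f f' : E B j) (w : V B n) i :
  4 <= n -> v \in Vo P n -> down (@is_max B edge_lt) u0 v -> src f = u0 ->
  is_succ edge_lt f f' -> down (@is_min B edge_lt) (src f') w ->
  mplus P edge_lt v i -> mminus P edge_lt w i.
Proof.
move=> n_ge4 vVo Hd Hsf Hsucc Hdm Hpl.
have n_gt0 : 0 < n by apply: leq_trans n_ge4.
have j_ge4 : 4 <= j := leq_trans n_ge4 (down_leq Hd).
have Lu : max_labelled u0 by rewrite /max_labelled (leq_trans _ j_ge4) // (leq_trans _ j_ge4) ?orbT.
have [Lv Ev] := plus_label_down Hd n_gt0 Lu.
have Iu : ~~ in_cell u0.
  by move: vVo; rewrite in_Vo; apply: contra => /mem_cell/(down_cell Hd n_gt0)/in_cellI.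
have Iy : ~~ in_cell (rng f).
  apply: contra Iu; rewrite -Hsf; apply: in_cell_src; exact: leq_trans j_ge4.
have El := succ_chained Hsucc (edge_list_chained (leq_trans _ j_ge4) Iy).
have Lf' : min_labelled (src f').
  by rewrite /min_labelled (leq_trans _ j_ge4) // (leq_trans _ j_ge4) ?orbT.
have [Lw Ew] := minus_label_down Hdm n_gt0 Lf'.
have -> : i = minus_label w by rewrite (mplus_uniq Hpl Lv) Ev -Hsf Ew; exact: El.
exact: mminus_minus_label.
Qed.

Lemma succ_cell_min n (v : V B n.+1) (e f : E B n) i : 2 < n -> v \in Vo P n.+1 ->
  rng e = v -> src e \in P n i -> is_succ edge_lt e f -> mminus P edge_lt (src f) i.
Proof.
move=> n_gt2 vVo Re ei Hsucc; have n_gt0 : 0 < n by apply: ltnW (ltnW n_gt2).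
have Ie : ~~ in_cell (rng e) by rewrite Re -in_Vo.
have El := succ_chained Hsucc (edge_list_chained n_gt2 Ie).
have <- : minus_label (src f) = i.
  rewrite -/(tail_label f) -El; have [_ ->] := labels_in_cell (in_cellI ei).
  exact: cellE n_gt0 ei.
by apply: mminus_minus_label; rewrite /min_labelled n_gt0 n_gt2 orbT.
Qed.

Lemma ksimple_ordered_edge_lt : ksimple_ordered P edge_lt.
Proof.
split=> //; first exact: zpath_extremal.
exists 4; split.
- move=> n v n_ge4 _ _; have [Hp Hm] := labels_defined v n_ge4.
  by split; [exists (plus_label v) | exists (minus_label v)].
- move=> n v n_ge4 _ vVo j u0 f f' w Hd Hsf _ Hsucc Hdm i Hpl.
  exact: succ_max_min n_ge4 vVo Hd Hsf Hsucc Hdm Hpl.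
- move=> n v e f i n_ge4 _ vVo Re _ ei Hsucc.
  exact: succ_cell_min n_ge4 vVo Re ei Hsucc.
Qed.

End Thread.

End Construction.

Theorem theorem8p2 (B : bratteli) (k : nat) (P : forall n, 'I_k -> {set V B n})
    (d : 'I_k -> forall n, V B n -> int) :
  0 < k ->
  strongly_ksimple P ->
  (forall n (w : V B n.+1) (v : V B n), 0 < n -> w \in Vo P n.+1 ->
      exists e : E B n, src e = v /\ rng e = w) ->
  (forall i, phi_thread P (d i)) ->
  (forall c : 'I_k -> int,
      lim_zero P (fun n v => \sum_(i < k) c i * d i n v)%R <-> (forall i j, c i = c j)) ->
  (forall n (v : V B n) i, 0 < n -> v \in Vo P n -> d i n v \in [:: 0; 1; -1]%R) ->
  (forall n (v : V B n), 0 < n -> v \in Vo P n ->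
      #|[set i | d i n v != 0%R]| \in [:: 0; 2] /\
      forall i1 i2, i1 != i2 -> [set i | d i n v != 0%R] = [set i1; i2] ->
        (d i1 n v, d i2 n v) = (1, -1)%R \/ (d i1 n v, d i2 n v) = (-1, 1)%R) ->
  exists lt : forall n, rel (E B n),
    is_order lt /\ strongly_ksimple P /\ ksimple_ordered P lt.
Proof.
(* Hypothesis (b) is implied by (c) and not needed. *)
move=> k_gt0 sksP Vo_full d_thread d_indep _ d_support.
have ksP : ksimple P by case: sksP.
exists (@edge_lt _ _ _ k_gt0 ksP _ Vo_full d_thread d_indep d_support).
split; first exact: edge_lt_order.
by split => //; apply: ksimple_ordered_edge_lt.
Qed.
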